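(* For every positive integer $r$, $\displaystyle \bar T(\{1\}_r)=\frac{(-1)^r}{r!}\left(\frac{\pi}{2}\right)^r.$
   Context: $\{1\}_r$ denotes the sequence of $r$ ones. $\bar T(\{1\}_r):=2^r\sum_{0<n_1<\cdots<n_r}\frac{(-1)^{n_r}}{(2n_1-1)(2n_2-2)\cdots(2n_r-r)}$ (conditionally convergent). *)

From Stdlib Require Import Reals List.
From Coquelicot Require Import Coquelicot.
Open Scope R_scope.

(* tdep k m = sum over 0 < n_1 < ... < n_k = m of
     1/((2 n_1 - 1)(2 n_2 - 2) ... (2 n_k - k)),
   with the convention tdep 0 m = [m = 0] (empty chain ending at n_0 = 0). *)
Fixpoint tdep (k m : nat) : R :=
  match k with
  | O => if Nat.eqb m 0 then 1 else 0
  | S k' => / (2 * INR m - INR (S k')) *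
            fold_right Rplus 0 (map (tdep k') (List.seq 0 m))
  end.

Definition Tbar_partial (r N : nat) : R :=
  sum_f_R0 (fun m => (-1) ^ m * tdep r m) N.

(* \bar T({1}_r) := 2^r * lim_{N -> oo} Tbar_partial r N  (conditionally
   convergent, summed by the largest index). *)

From Stdlib Require Import Reals List.
From Coquelicot Require Import Coquelicot.
From Stdlib Require Import Lra Lia Psatz Arith.
Open Scope R_scope.

(* Write [tdep k m] for the sum over chains ending at n_k = m and
   consider the truncated generating functions
     gen k N y = sum_{m < N} (-1)^m tdep k m y^(2m-k),
   so that 2^r Tbar_partial r N = 2^r gen r (N+1) 1.  The recursion defining
   [tdep] says that the derivative of gen (k+1) N is a series whose Abel
   transform equals -gen k N / (1 + y^2), up to a boundary term carrying the
   partial sum tsum k N = sum_{m < N} tdep k m.  On the other side,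
   atan_power k y = (-1)^k atan(y)^k / k! satisfies exactly
   (atan_power (k+1))' = - atan_power k / (1 + y^2).  Integrating the
   difference over [0, y] (a mean value comparison) shows by induction on k
   that gen k N converges to atan_power k uniformly on [0, 1], provided the
   boundary terms tsum k N / (2N - k + 1) tend to 0; this follows from the
   bound tsum k N <= 2^k sqrt N.  Evaluating at y = 1, where atan 1 = PI/4,
   gives the theorem. *)

Fixpoint tsum (k N : nat) : R :=
  match N with O => 0 | S N' => tsum k N' + tdep k N' end.

Lemma fold_right_Rplus_acc (l : list R) (a : R) :
  fold_right Rplus a l = fold_right Rplus 0 l + a.
Proof. induction l as [|x l IH]; simpl; [lra | rewrite IH; lra]. Qed.

Lemma tdep_succ k m : tdep (S k) m = / (2 * INR m - INR (S k)) * tsum k m.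
Proof.
  cbn [tdep]. f_equal. induction m as [|m IH]; [reflexivity|].
  rewrite seq_S, map_app, fold_right_app. simpl.
  rewrite fold_right_Rplus_acc, IH. lra.
Qed.

Lemma tsum_of_zero k m :
  (forall n, (n < m)%nat -> tdep k n = 0) -> tsum k m = 0.
Proof.
  induction m as [|m IH]; intros H; simpl; [reflexivity|].
  rewrite IH by (intros; apply H; lia). rewrite H by lia. ring.
Qed.

(* A strictly increasing chain of k positive integers ends at n_k >= k. *)
Lemma tdep_below k m : (m < k)%nat -> tdep k m = 0.
Proof.
  revert m; induction k as [|k IH]; intros m Hm; [lia|].
  rewrite tdep_succ, tsum_of_zero; [ring|]. intros n Hn; apply IH; lia.
Qed.

Lemma tsum_below k m : (m <= k)%nat -> tsum k m = 0.
Proof. intros; apply tsum_of_zero; intros; apply tdep_below; lia. Qed.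

Lemma denom_ge k m : (k < m)%nat -> INR m <= 2 * INR m - INR (S k).
Proof. intros H. pose proof (le_INR (S k) m ltac:(lia)). lra. Qed.

Lemma tsum_nonneg_of k m : (forall n, 0 <= tdep k n) -> 0 <= tsum k m.
Proof. intros H; induction m; simpl; [lra | specialize (H m); lra]. Qed.

Lemma tdep_nonneg k m : 0 <= tdep k m.
Proof.
  revert m; induction k as [|k IH]; intros m.
  - simpl. destruct (Nat.eqb m 0); lra.
  - destruct (le_lt_dec m k) as [Hm|Hm].
    + rewrite tdep_below by lia. lra.
    + rewrite tdep_succ. apply Rmult_le_pos; [|now apply tsum_nonneg_of].
      pose proof (denom_ge k m Hm). pose proof (lt_0_INR m ltac:(lia)).
      apply Rlt_le, Rinv_0_lt_compat. lra.
Qed.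

Lemma tsum_nonneg k m : 0 <= tsum k m.
Proof. apply tsum_nonneg_of, tdep_nonneg. Qed.

Lemma tdep_succ_mul k m : tdep (S k) m * INR (2 * m - S k) = tsum k m.
Proof.
  destruct (le_lt_dec m k) as [Hm|Hm].
  - rewrite tdep_below, tsum_below by lia. ring.
  - rewrite tdep_succ, minus_INR, mult_INR by lia.
    pose proof (denom_ge k m Hm). pose proof (lt_0_INR m ltac:(lia)).
    change (INR 2) with 2. field. lra.
Qed.

Lemma sqrt_increment x : 0 <= x -> sqrt x + / (2 * sqrt (x + 1)) <= sqrt (x + 1).
Proof.
  intros Hx.
  pose proof (sqrt_pos x) as Ha. pose proof (sqrt_lt_R0 (x + 1) ltac:(lra)) as Hs.
  pose proof (sqrt_sqrt x Hx) as Ea. pose proof (sqrt_sqrt (x + 1) ltac:(lra)) as Es.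
  set (a := sqrt x) in *; set (s := sqrt (x + 1)) in *.
  apply (Rmult_le_reg_r (2 * s)); [lra|].
  rewrite Rmult_plus_distr_r, Rinv_l by lra. nra.
Qed.

Lemma tdep_succ_bound k c m :
  (forall N, tsum k N <= c * sqrt (INR N)) -> (0 < m)%nat ->
  tdep (S k) m <= c / sqrt (INR m).
Proof.
  intros Hc Hm.
  pose proof (lt_0_INR m Hm) as Hm0. pose proof (sqrt_lt_R0 _ Hm0) as Hs.
  pose proof (sqrt_sqrt (INR m) (pos_INR m)) as Es.
  pose proof (tdep_nonneg (S k) m) as Ht.
  assert (Hmul : tdep (S k) m * INR m <= c * sqrt (INR m)).
  { destruct (le_lt_dec m k) as [Hk|Hk].
    - rewrite tdep_below by lia. rewrite Rmult_0_l, <- (tsum_below k m) by lia.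
      apply Hc.
    - rewrite <- (Hc m), <- tdep_succ_mul. apply Rmult_le_compat_l; [lra|].
      apply le_INR; lia. }
  apply (Rmult_le_reg_r (sqrt (INR m))); [lra|].
  unfold Rdiv. rewrite Rmult_assoc, Rinv_l by lra. nra.
Qed.

(* Summing the previous bound against the sqrt increments doubles the constant. *)
Lemma tsum_succ_bound k c :
  0 <= c -> (forall N, tsum k N <= c * sqrt (INR N)) ->
  forall N, tsum (S k) N <= 2 * c * sqrt (INR N).
Proof.
  intros Hc0 Hc.
  assert (Hshift : forall N, tsum (S k) (S N) <= 2 * c * sqrt (INR N)).
  { induction N as [|N IH].
    - change (tsum (S k) 1) with (0 + tdep (S k) 0).
      rewrite tdep_below by lia. simpl. rewrite sqrt_0. lra.
    - change (tsum (S k) (S (S N))) with (tsum (S k) (S N) + tdep (S k) (S N)).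
      pose proof (tdep_succ_bound k c (S N) Hc ltac:(lia)) as Ht.
      pose proof (sqrt_increment (INR N) (pos_INR N)) as Hinc.
      rewrite <- S_INR in Hinc.
      pose proof (sqrt_lt_R0 _ (lt_0_INR (S N) ltac:(lia))) as Hs.
      replace (c / sqrt (INR (S N))) with (2 * c * / (2 * sqrt (INR (S N))))
        in Ht by (field; lra).
      nra. }
  intros [|N].
  - simpl. rewrite sqrt_0. lra.
  - eapply Rle_trans; [apply Hshift|]. apply Rmult_le_compat_l; [lra|].
    apply sqrt_le_1_alt, le_INR; lia.
Qed.

Lemma tsum_zero N : (0 < N)%nat -> tsum 0 N = 1.
Proof.
  destruct N as [|N]; [lia|]. intros _. induction N as [|N IH]; [simpl; lra|].
  change (tsum 0 (S (S N))) with (tsum 0 (S N) + tdep 0 (S N)). rewrite IH.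
  simpl. ring.
Qed.

Lemma tsum_sqrt_bound k N : tsum k N <= 2 ^ k * sqrt (INR N).
Proof.
  revert N; induction k as [|k IH]; intros N.
  - destruct N as [|N].
    + simpl. rewrite sqrt_0. lra.
    + rewrite tsum_zero by lia. rewrite pow_O, Rmult_1_l, <- sqrt_1.
      apply sqrt_le_1_alt. change 1 with (INR 1). apply le_INR; lia.
  - replace (2 ^ S k) with (2 * 2 ^ k) by reflexivity.
    apply tsum_succ_bound; [apply pow_le; lra | exact IH].
Qed.

Lemma boundary_term_lim k : is_lim_seq (fun N => tsum k N / INR (S (2 * N - k))) 0.
Proof.
  apply is_lim_seq_le_le with (u := fun _ => 0)
                              (w := fun N => 2 ^ k * / sqrt (INR (S N))).
  - intros N.
    pose proof (lt_0_INR _ (Nat.lt_0_succ (2 * N - k))) as HD.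
    pose proof (sqrt_lt_R0 _ (lt_0_INR (S N) ltac:(lia))) as Hs.
    pose proof (sqrt_sqrt _ (pos_INR (S N))) as Es.
    pose proof (pow_lt 2 k ltac:(lra)) as Hp.
    pose proof (tsum_nonneg k N) as HC.
    split; [apply Rmult_le_pos; [lra | apply Rlt_le, Rinv_0_lt_compat; lra]|].
    destruct (le_lt_dec N k) as [Hk|Hk].
    { rewrite tsum_below by lia. unfold Rdiv. rewrite Rmult_0_l.
      apply Rlt_le, Rmult_lt_0_compat; [lra | apply Rinv_0_lt_compat; lra]. }
    assert (HDN : INR (S N) <= INR (S (2 * N - k))) by (apply le_INR; lia).
    assert (HCN : tsum k N <= 2 ^ k * sqrt (INR (S N))).
    { eapply Rle_trans; [apply tsum_sqrt_bound|]. apply Rmult_le_compat_l; [lra|].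
      apply sqrt_le_1_alt, le_INR; lia. }
    apply (Rmult_le_reg_r (INR (S (2 * N - k)) * sqrt (INR (S N)))); [nra|].
    replace (tsum k N / INR (S (2 * N - k)) * (INR (S (2 * N - k)) * sqrt (INR (S N))))
      with (tsum k N * sqrt (INR (S N))) by (field; lra).
    replace (2 ^ k * / sqrt (INR (S N)) * (INR (S (2 * N - k)) * sqrt (INR (S N))))
      with (2 ^ k * INR (S (2 * N - k))) by (field; lra).
    nra.
  - apply is_lim_seq_const.
  - assert (Hinv : is_lim_seq (fun N => / sqrt (INR N)) 0).
    { apply (is_lim_seq_inv _ p_infty); [|discriminate].
      eapply filterlim_comp; [apply is_lim_seq_INR|].
      apply (is_lim_sqrt_p (fun x => x) p_infty), is_lim_id. }
    apply is_lim_seq_incr_1, (is_lim_seq_scal_l _ (2 ^ k)) in Hinv.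
    simpl in Hinv. rewrite Rmult_0_r in Hinv. exact Hinv.
Qed.

Fixpoint gen (k N : nat) (y : R) : R :=
  match N with
  | O => 0
  | S N' => gen k N' y + (-1) ^ N' * tdep k N' * y ^ (2 * N' - k)
  end.

(* Its derivative when k is replaced by k+1, written through [tsum]. *)
Fixpoint gen_deriv (k N : nat) (y : R) : R :=
  match N with
  | O => 0
  | S N' => gen_deriv k N' y + (-1) ^ N' * tsum k N' * y ^ pred (2 * N' - S k)
  end.

Definition atan_power (k : nat) (y : R) : R := (-1) ^ k * atan y ^ k / INR (fact k).

Lemma derivable_pt_lim_eq f x l l' :
  l = l' -> derivable_pt_lim f x l -> derivable_pt_lim f x l'.
Proof. intros ->; auto. Qed.

Lemma derivable_pt_lim_monomial c n x :
  derivable_pt_lim (fun u => c * u ^ n) x (c * (INR n * x ^ pred n)).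
Proof. apply (derivable_pt_lim_scal (fun u => u ^ n)), derivable_pt_lim_pow. Qed.

(* Term by term, tdep (k+1) m (2m-k-1) = tsum k m gives (gen (k+1) N)' = gen_deriv k N. *)
Lemma gen_derivative k N y : derivable_pt_lim (gen (S k) N) y (gen_deriv k N y).
Proof.
  induction N as [|N IH]; cbn [gen gen_deriv].
  - apply derivable_pt_lim_const.
  - apply (derivable_pt_lim_eq _ _ (gen_deriv k N y + (-1) ^ N * tdep (S k) N *
             (INR (2 * N - S k) * y ^ pred (2 * N - S k)))).
    { rewrite <- tdep_succ_mul. ring. }
    apply (derivable_pt_lim_plus (gen (S k) N)
             (fun y => (-1) ^ N * tdep (S k) N * y ^ (2 * N - S k))).
    + exact IH.
    + apply derivable_pt_lim_monomial.
Qed.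

Lemma gen_deriv_abel k N y :
  (1 + y ^ 2) * gen_deriv k (S N) y = - gen k N y + (-1) ^ N * tsum k N * y ^ (2 * N - k).
Proof.
  induction N as [|N IH]; [cbn; ring|].
  change (gen_deriv k (S (S N)) y) with
    (gen_deriv k (S N) y + (-1) ^ S N * tsum k (S N) * y ^ pred (2 * S N - S k)).
  change (gen k (S N) y) with (gen k N y + (-1) ^ N * tdep k N * y ^ (2 * N - k)).
  change (tsum k (S N)) with (tsum k N + tdep k N).
  change ((-1) ^ S N) with (-1 * (-1) ^ N).
  rewrite Rmult_plus_distr_l, IH.
  destruct (le_lt_dec k N) as [H|H].
  - replace (pred (2 * S N - S k)) with (2 * N - k)%nat by lia.
    replace (2 * S N - k)%nat with (2 * N - k + 2)%nat by lia.
    rewrite pow_add. ring.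
  - rewrite tdep_below by lia. rewrite tsum_below by lia. ring.
Qed.

Lemma gen_succ_at_0 k N : gen (S k) N 0 = 0.
Proof.
  induction N as [|N IH]; [reflexivity|]. cbn [gen]. rewrite IH.
  destruct (le_lt_dec N k) as [H|H].
  - rewrite tdep_below by lia. ring.
  - rewrite pow_i by lia. ring.
Qed.

Lemma gen_zero N y : (0 < N)%nat -> gen 0 N y = 1.
Proof.
  destruct N as [|N]; [lia|]. intros _. induction N as [|N IH]; [simpl; ring|].
  change (gen 0 (S (S N)) y) with
    (gen 0 (S N) y + (-1) ^ S N * tdep 0 (S N) * y ^ (2 * S N - 0)).
  rewrite IH. simpl. ring.
Qed.

Lemma atan_power_zero y : atan_power 0 y = 1.
Proof. unfold atan_power. simpl. field. Qed.

Lemma atan_power_succ_at_0 k : atan_power (S k) 0 = 0.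
Proof. unfold atan_power. rewrite atan_0, pow_i by lia. unfold Rdiv. ring. Qed.

Lemma atan_power_derivative k y :
  derivable_pt_lim (atan_power (S k)) y (- atan_power k y / (1 + y ^ 2)).
Proof.
  set (c := (-1) ^ S k / INR (fact (S k))).
  pose proof (INR_fact_neq_0 k). pose proof (lt_0_INR (S k) ltac:(lia)).
  pose proof (pow2_ge_0 y).
  apply (derivable_pt_lim_eq _ _ (c * (INR (S k) * atan y ^ pred (S k)) * / (1 + y ^ 2))).
  { unfold c, atan_power. change (fact (S k)) with (S k * fact k)%nat.
    rewrite mult_INR. change ((-1) ^ S k) with (-1 * (-1) ^ k). simpl pred.
    field. repeat split; lra. }
  apply is_derive_Reals, (is_derive_ext (fun y => c * atan y ^ S k)).
  { intros t. change (c * atan t ^ S k = atan_power (S k) t).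
    unfold atan_power, c. field. apply INR_fact_neq_0. }
  apply is_derive_Reals.
  exact (derivable_pt_lim_comp atan (fun u => c * u ^ S k) y _ _
           (derivable_pt_lim_atan y) (derivable_pt_lim_monomial c (S k) (atan y))).
Qed.

Lemma increment_le_of_deriv_le (g f g' f' : R -> R) a b :
  a <= b ->
  (forall t, a <= t <= b -> derivable_pt_lim g t (g' t)) ->
  (forall t, a <= t <= b -> derivable_pt_lim f t (f' t)) ->
  (forall t, a <= t <= b -> Rabs (g' t) <= f' t) ->
  Rabs (g b - g a) <= f b - f a.
Proof.
  intros Hab Hg Hf Hb.
  destruct (Req_dec a b) as [<-|Hne]; [rewrite Rminus_diag, Rabs_R0; lra|].
  destruct (MVT_cor2 (fun x => f x - g x) (fun x => f' x - g' x) a b ltac:(lra))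
    as [c [Ec Hc]]; [intros; apply derivable_pt_lim_minus; auto|].
  destruct (MVT_cor2 (fun x => f x + g x) (fun x => f' x + g' x) a b ltac:(lra))
    as [d [Ed Hd]]; [intros; apply derivable_pt_lim_plus; auto|].
  pose proof (Hb c ltac:(lra)) as Bc. pose proof (Hb d ltac:(lra)) as Bd.
  apply Rabs_le_between in Bc. apply Rabs_le_between in Bd.
  apply Rabs_le. split; nra.
Qed.

(* Pointwise form of the derivative comparison: by Abel summation the
   derivative of the error for k+1 is the error for k plus the boundary term,
   damped by 1 / (1 + t^2) <= 1. *)
Lemma gen_error_deriv_bound k M e t :
  0 <= t <= 1 -> Rabs (gen k M t - atan_power k t) <= e ->
  Rabs (gen_deriv k (S M) t - (- atan_power k t / (1 + t ^ 2)))
    <= e + tsum k M * t ^ (2 * M - k).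
Proof.
  intros Ht He.
  pose proof (tsum_nonneg k M) as HC. pose proof (pow_le t (2 * M - k) ltac:(lra)) as Hp.
  pose proof (pow2_ge_0 t) as Ht2.
  set (C := tsum k M) in *. set (n := (2 * M - k)%nat) in *.
  assert (Hid : gen_deriv k (S M) t - (- atan_power k t / (1 + t ^ 2)) =
                (- (gen k M t - atan_power k t) + (-1) ^ M * C * t ^ n) * / (1 + t ^ 2)).
  { apply (Rmult_eq_reg_l (1 + t ^ 2)); [|lra].
    rewrite Rmult_minus_distr_l, gen_deriv_abel. unfold C, n. field. lra. }
  assert (Hnum : Rabs (- (gen k M t - atan_power k t) + (-1) ^ M * C * t ^ n) <= e + C * t ^ n).
  { eapply Rle_trans; [apply Rabs_triang|].
    rewrite Rabs_Ropp, !Rabs_mult, pow_1_abs, (Rabs_pos_eq C), (Rabs_pos_eq (t ^ n)) by lra.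
    lra. }
  assert (Hdamp : 0 < / (1 + t ^ 2) <= 1).
  { split; [apply Rinv_0_lt_compat; lra|].
    rewrite <- Rinv_1. apply Rinv_le_contravar; lra. }
  rewrite Hid, Rabs_mult, (Rabs_pos_eq (/ _)) by lra.
  pose proof (Rabs_pos (- (gen k M t - atan_power k t) + (-1) ^ M * C * t ^ n)).
  nra.
Qed.

(* Integrating the previous bound over [0, y] transfers a uniform error e for
   (k, M) to the error e + tsum k M / (2M - k + 1) for (k+1, M+1). *)
Lemma gen_error_step k M e y :
  0 <= y <= 1 ->
  (forall t, 0 <= t <= 1 -> Rabs (gen k M t - atan_power k t) <= e) ->
  Rabs (gen (S k) (S M) y - atan_power (S k) y) <= e + tsum k M / INR (S (2 * M - k)).
Proof.
  intros Hy He.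
  pose proof (tsum_nonneg k M) as HC.
  set (C := tsum k M) in *. set (n := (2 * M - k)%nat).
  pose proof (lt_0_INR (S n) ltac:(lia)) as Hn.
  assert (He0 : 0 <= e) by (eapply Rle_trans; [apply Rabs_pos | apply (He 0); lra]).
  assert (Hint := increment_le_of_deriv_le
    (fun t => gen (S k) (S M) t - atan_power (S k) t)
    (fun t => e * t ^ 1 + C / INR (S n) * t ^ S n)
    (fun t => gen_deriv k (S M) t - (- atan_power k t / (1 + t ^ 2)))
    (fun t => e + C * t ^ n) 0 y ltac:(lra)).
  cbv beta in Hint. rewrite gen_succ_at_0, atan_power_succ_at_0, pow_i, pow_i in Hint by lia.
  assert (Hyn : y ^ S n <= 1) by (rewrite <- (pow1 (S n)); apply pow_incr; lra).
  assert (0 <= C / INR (S n)) by (apply Rmult_le_pos; [lra | apply Rlt_le, Rinv_0_lt_compat; lra]).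
  replace (gen (S k) (S M) y - atan_power (S k) y) with
    (gen (S k) (S M) y - atan_power (S k) y - (0 - 0)) by ring.
  eapply Rle_trans; [apply Hint|].
  - intros t _. apply derivable_pt_lim_minus;
      [apply gen_derivative | apply atan_power_derivative].
  - intros t _.
    apply (derivable_pt_lim_eq _ _
      (e * (INR 1 * t ^ pred 1) + C / INR (S n) * (INR (S n) * t ^ pred (S n)))).
    { simpl pred. change (INR 1) with 1. field. lra. }
    apply (derivable_pt_lim_plus (fun t => e * t ^ 1) (fun t => C / INR (S n) * t ^ S n));
      apply derivable_pt_lim_monomial.
  - intros t Ht. apply gen_error_deriv_bound; [lra | apply He; lra].
  - rewrite pow_1. nra.
Qed.

Definition unif_approx (P : nat -> R -> R) (f : R -> R) : Prop :=
  forall eps, 0 < eps -> exists N0, forall N y,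
    (N0 <= N)%nat -> 0 <= y <= 1 -> Rabs (P N y - f y) <= eps.

Lemma unif_approx_lim_at P f y :
  unif_approx P f -> 0 <= y <= 1 -> is_lim_seq (fun N => P N y) (f y).
Proof.
  intros Hu Hy. apply is_lim_seq_Reals. intros eps Heps.
  destruct (Hu (eps / 2) ltac:(lra)) as [N0 HN0].
  exists N0. intros N HN. unfold R_dist. pose proof (HN0 N y ltac:(lia) Hy). lra.
Qed.

Lemma gen_unif_approx k : unif_approx (gen k) (atan_power k).
Proof.
  induction k as [|k IH]; intros eps Heps.
  - exists 1%nat. intros N y HN _.
    rewrite gen_zero, atan_power_zero by lia. rewrite Rminus_diag, Rabs_R0. lra.
  - destruct (IH (eps / 2) ltac:(lra)) as [N1 HN1].
    pose proof (proj1 (is_lim_seq_Reals _ _) (boundary_term_lim k) (eps / 2) ltac:(lra))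
      as [N2 HN2].
    exists (S (max N1 N2)). intros [|M] y HM Hy; [lia|].
    eapply Rle_trans; [apply (gen_error_step k M (eps / 2) y Hy)|].
    { intros t Ht. apply HN1; [lia | exact Ht]. }
    pose proof (HN2 M ltac:(lia)) as HB. unfold R_dist in HB.
    rewrite Rminus_0_r in HB. apply Rabs_def2 in HB. lra.
Qed.

Lemma Tbar_partial_gen r N : Tbar_partial r N = gen r (S N) 1.
Proof.
  unfold Tbar_partial. induction N as [|N IH].
  - cbn [sum_f_R0 gen]. rewrite pow1. ring.
  - rewrite tech5, IH.
    change (gen r (S (S N)) 1) with
      (gen r (S N) 1 + (-1) ^ S N * tdep r (S N) * 1 ^ (2 * S N - r)).
    rewrite pow1. ring.
Qed.

Theorem mainTheorem7 (r : nat) (hr : (0 < r)%nat) :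
  is_lim_seq (fun N : nat => 2 ^ r * Tbar_partial r N)
    ((-1) ^ r / INR (Factorial.fact r) * (PI / 2) ^ r).
Proof.
  assert (Hval : (-1) ^ r / INR (Factorial.fact r) * (PI / 2) ^ r = 2 ^ r * atan_power r 1).
  { unfold atan_power. rewrite atan_1.
    replace (PI / 2) with (2 * (PI / 4)) by field.
    rewrite Rpow_mult_distr. field. apply INR_fact_neq_0. }
  rewrite Hval.
  apply (is_lim_seq_ext (fun N => 2 ^ r * gen r (S N) 1));
    [intros N; rewrite Tbar_partial_gen; reflexivity|].
  apply (is_lim_seq_scal_l _ (2 ^ r) (atan_power r 1)).
  apply (is_lim_seq_incr_1 (fun N => gen r N 1)), unif_approx_lim_at; [apply gen_unif_approx | lra].
Qed.
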